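(* Let $n\ge 4$ and $\bar K>0$. For all $x\ge 0$ the functions $a,\mathring a$ satisfy: (i) $\frac{4x(\mathring a'(x))^2}{\mathring a(x)}<1$; (ii) $2x\mathring a''(x)+\mathring a'(x)<\frac{2(n-1)}{n(n+2)}$; (iii) $\frac{n-2}{\sqrt{n(n-1)}}\sqrt{x\,\mathring a(x)}+\mathring a(x)<\frac{x}{n}+n\bar K$; (iv) $n\bar K(\mathring a+x\mathring a')-a(\mathring a-x\mathring a')\ge\frac{2n(n-2)(n-1)^2\bar K^4}{\big(x+\sqrt{2+\sqrt{2n}}\,(n-1)\bar K\big)^2}$; (v) $2\mathring a-\frac{x}{n}+x\mathring a'\le 2\sqrt{2n}\,\bar K-\frac{(n-4)x}{n(n-1)}-\frac{6(\sqrt{2n}-2)\bar K x}{3x+2\sqrt{2n}(n-1)\bar K}$; (vi) $\frac{x}{n-1}(a+n\bar K)-\Big(\frac{x}{n-1}+2n\bar K\Big)\big(\mathring a+a-n\bar K-x\mathring a'\big)<-\frac{2x\bar K}{n-1}+2n(n-4)\bar K^2$, where $a,\mathring a,\mathring a',\mathring a''$ are evaluated at $x$.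
   Context: For $x\ge0$: $a(x)=\sqrt{\big(\frac{x}{n-1}+2\bar K\big)^2+(2n-4)\bar K^2}$ and $\mathring a(x)=a(x)-\frac{x}{n}$; primes denote derivatives in $x$. *)

From Stdlib Require Import Reals Lra.
From Coquelicot Require Import Coquelicot.
Open Scope R_scope.

Definition a_fun (n : nat) (K : R) (x : R) : R :=
  sqrt ((x / (INR n - 1) + 2 * K) ^ 2 + (2 * INR n - 4) * K ^ 2).

Definition ao_fun (n : nat) (K : R) (x : R) : R :=
  a_fun n K x - x / INR n.

Definition ao1 (n : nat) (K : R) (x : R) : R := Derive (ao_fun n K) x.
Definition ao2 (n : nat) (K : R) (x : R) : R := Derive (Derive (ao_fun n K)) x.

From Stdlib Require Import Reals Lra Psatz.
From Coquelicot Require Import Coquelicot.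
Open Scope R_scope.

(* Put X = x/(n-1) and A = a(x).  Then A > 0 satisfies the single
   algebraic relation A^2 = X^2 + 4KX + 2nK^2, i.e. A^2 - u^2 = 2(n-2)K^2 with
   u = X + 2K, and the derivatives have the closed forms
     ao' = u/((n-1)A) - 1/n,      ao'' = 2(n-2)K^2/((n-1)^2 A^3).
   Each of the six items thus becomes an inequality between rational functions
   of N = n, K, X, A.  After clearing denominators A enters (at most) linearly,
   as "P <= Q * A"; squaring and eliminating A^2 leaves a polynomial in X and K
   whose coefficients are nonnegative once N >= 4 (for items (iv) and (v) with
   b = sqrt(2N) >= 2 sqrt 2 and g = sqrt(2 + b) >= 2.19). *)

Section Derivatives.
Variables (n : nat) (K : R).
Hypothesis hn : (4 <= n)%nat.
Hypothesis hK : 0 < K.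

Definition ao1_closed (y : R) : R :=
  (y / (INR n - 1) + 2 * K) / ((INR n - 1) * a_fun n K y) - 1 / INR n.
Definition ao2_closed (y : R) : R :=
  2 * (INR n - 2) * K ^ 2 / ((INR n - 1) ^ 2 * a_fun n K y ^ 3).

Lemma INR_ge_4 : 4 <= INR n.
Proof. apply le_INR in hn. simpl in hn. lra. Qed.

Lemma radicand_pos (y : R) : 0 < (y / (INR n - 1) + 2 * K) ^ 2 + (2 * INR n - 4) * K ^ 2.
Proof.
  pose proof INR_ge_4.
  assert (0 < (2 * INR n - 4) * K ^ 2) by (apply Rmult_lt_0_compat; [lra | apply pow_lt; lra]).
  pose proof (pow2_ge_0 (y / (INR n - 1) + 2 * K)). lra.
Qed.

Lemma a_fun_pos (y : R) : 0 < a_fun n K y.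
Proof. apply sqrt_lt_R0, radicand_pos. Qed.

Lemma a_fun_sqr (y : R) :
  a_fun n K y * a_fun n K y = (y / (INR n - 1) + 2 * K) ^ 2 + (2 * INR n - 4) * K ^ 2.
Proof. apply sqrt_sqrt, Rlt_le, radicand_pos. Qed.

(* auto_derive writes squares as z * (z * 1); this folds them back. *)
Lemma radicand_unfolded (c z : R) : z * (z * 1) + c * (K * (K * 1)) = z ^ 2 + c * K ^ 2.
Proof. ring. Qed.

Lemma is_derive_ao (y : R) : is_derive (ao_fun n K) y (ao1_closed y).
Proof.
  pose proof (radicand_pos y) as hF. pose proof (a_fun_pos y) as ha.
  pose proof INR_ge_4.
  unfold ao_fun, ao1_closed, a_fun in *. auto_derive; rewrite ?radicand_unfolded.
  - exact hF.
  - set (S := sqrt _) in *. field. lra.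
Qed.

Lemma is_derive_ao1_closed (y : R) : is_derive ao1_closed y (ao2_closed y).
Proof.
  pose proof (radicand_pos y) as hF. pose proof (a_fun_pos y) as ha.
  pose proof (a_fun_sqr y) as ha2. pose proof INR_ge_4.
  unfold ao1_closed, ao2_closed, a_fun in *. auto_derive; rewrite ?radicand_unfolded.
  - split; [exact hF | split; [apply Rmult_integral_contrapositive_currified |]; lra].
  - set (S := sqrt _) in *.
    (* the result is expressed through S^3, so trade K^2 for S^2 - (y/(n-1) + 2K)^2 *)
    assert (hK2 : 2 * (INR n - 2) * K ^ 2 = S * S - (y / (INR n - 1) + 2 * K) ^ 2)
      by (rewrite ha2; ring).
    rewrite hK2. field. lra.
Qed.

Lemma ao1_eq (y : R) : ao1 n K y = ao1_closed y.
Proof. apply is_derive_unique, is_derive_ao. Qed.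

Lemma ao2_eq (y : R) : ao2 n K y = ao2_closed y.
Proof.
  unfold ao2. rewrite (Derive_ext (Derive (ao_fun n K)) ao1_closed y ao1_eq).
  apply is_derive_unique, is_derive_ao1_closed.
Qed.
End Derivatives.

(* Item (i) reduces to 4 X D^2 < N (N-1) A^2 (N A - (N-1) X), where
   D = N u - (N-1) A is the numerator of N (N-1) A ao'.  These two lemmas
   are its two sign cases: for D >= 0 one uses D < A, for D < 0 the AM-GM
   bound 4 N u (-D) <= ((N-1) A)^2. *)
Lemma numerator_bound_pos (N X A D : R) : 4 <= N -> 0 <= X -> X < A -> 0 <= D < A ->
  4 * X * D ^ 2 < N * (N - 1) * A ^ 2 * (N * A - (N - 1) * X).
Proof.
  intros hN hX hXA hD.
  assert (hlin : X < N * A - (N - 1) * X) by nra.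
  assert (hN12 : 12 <= N * (N - 1)) by nra.
  assert (hD2 : 4 * X * D ^ 2 <= 4 * X * A ^ 2) by (apply Rmult_le_compat_l; nra).
  assert (hcoef : 4 * X < N * (N - 1) * (N * A - (N - 1) * X)) by nra.
  assert (0 < A ^ 2) by nra.
  nra.
Qed.

Lemma numerator_bound_neg (N X u A : R) : 4 <= N -> 0 <= X -> X < u -> N * u < (N - 1) * A ->
  4 * X * (N * u - (N - 1) * A) ^ 2 < N * (N - 1) * A ^ 2 * (N * A - (N - 1) * X).
Proof.
  intros hN hX hXu hNu. set (c := N - 1) in *. set (D := N * u - c * A).
  assert (hA : 0 < A) by (unfold c in *; nra).
  assert (hD : 0 < - D <= c * A) by (unfold D; nra).
  assert (hD2 : D ^ 2 <= c * A * (- D)) by nra.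
  assert (hXD : 4 * X * D ^ 2 <= 4 * u * (c * A * (- D))) by (apply Rmult_le_compat; nra).
  assert (amgm : 4 * u * (- D) * N <= c ^ 2 * A ^ 2)
    by (pose proof (pow2_ge_0 (c * A - 2 * N * u)); unfold D; nra).
  assert (hNX : N * c * X < c * c * A) by (assert (N * X < c * A) by nra; unfold c in *; nra).
  assert (hlin : c ^ 2 * A < N ^ 2 * (N * A - c * X)).
  { assert (N * (N * c * X) < N * (c * c * A)) by (apply Rmult_lt_compat_l; lra).
    assert (0 < A * (N * (N ^ 2 - c ^ 2) - c ^ 2)) by (apply Rmult_lt_0_compat; [lra | unfold c; nra]).
    nra. }
  assert (h1 : N * (4 * X * D ^ 2) <= c * A * (c ^ 2 * A ^ 2))
    by (assert (0 <= c * A) by (unfold c; nra); nra).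
  assert (h2 : c * A ^ 2 * (c ^ 2 * A) < c * A ^ 2 * (N ^ 2 * (N * A - c * X)))
    by (apply Rmult_lt_compat_l; [unfold c; nra | lra]).
  apply Rmult_lt_reg_l with N; [lra | nra].
Qed.

(* max_{0 <= t <= 1} (3t - 2t^3) = sqrt 2 < 3/2, homogenised; used for (ii). *)
Lemma cubic_bound (u A : R) : 0 < A -> 0 <= u <= A -> 3 * u * A ^ 2 - 2 * u ^ 3 < 3 / 2 * A ^ 3.
Proof.
  intros hA hu.
  assert (0 <= (u - 7 / 10 * A) ^ 2 * (4 * u + 28 / 5 * A))
    by (apply Rmult_le_pos; [apply pow2_ge_0 | lra]).
  assert (0 < A ^ 2 * (32 / 125 * A - 3 / 25 * u)) by (apply Rmult_lt_0_compat; nra).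
  nra.
Qed.

(* The coefficients of the quintic P^2 - (S A)^2 arising in (iv) are
   nonnegative when b >= 2.8 and g = sqrt(2 + b) >= 2.19; the only nontrivial
   input is the AM-GM bound g <= (b + 3)/2. *)
Lemma quintic_coefficients_nonneg (b g : R) : 28 / 10 <= b -> 219 / 100 <= g -> g * g = 2 + b ->
  0 <= 4 * b ^ 2 + 32 * g - 80 /\
  0 <= b ^ 4 + 24 * b ^ 2 * g - 36 * b ^ 2 + 80 * b - 160 * g + 96 /\
  0 <= 4 * b ^ 4 * g - 4 * b ^ 4 + 44 * b ^ 3 - 72 * b ^ 2 * g + 52 * b ^ 2 + 64 * b * g - 80 * b - 144 /\
  0 <= 6 * b ^ 3 - 8 * b ^ 2 * g + 7 * b ^ 2 + 32 * b * g - 36 * b - 68 /\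
  0 <= b * g - b - 2.
Proof.
  intros hb hg hgg.
  assert (hg_up : g <= (b + 3) / 2) by nra.
  assert (hb2g : b ^ 2 * g <= b ^ 2 * ((b + 3) / 2)) by (apply Rmult_le_compat_l; [apply pow2_ge_0 | lra]).
  repeat split; try nra.
  assert (0 <= b ^ 4 * (g - 219 / 100)) by (apply Rmult_le_pos; [apply pow_le |]; lra).
  assert (0 <= (b - 28 / 10) * b ^ 3) by (apply Rmult_le_pos; [| apply pow_le]; lra).
  nra.
Qed.

Lemma majorant_iv (K X A b g : R) :
  0 < K -> 0 <= X -> 0 < A -> 28 / 10 <= b -> 219 / 100 <= g -> g * g = 2 + b ->
  A * A = X ^ 2 + 4 * K * X + b ^ 2 * K ^ 2 ->
  (2 * X ^ 2 + 6 * K * X + b ^ 2 * K ^ 2) * A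
    <= (4 * X + b ^ 2 * K) * (X + g * K) ^ 2 - (2 * X + 2 * K) * (X ^ 2 + 4 * K * X + b ^ 2 * K ^ 2).
Proof.
  intros hK hX hA hb hg hgg hAA.
  destruct (quintic_coefficients_nonneg b g hb hg hgg) as (c5 & c4 & c3 & c2 & c1).
  set (S := 2 * X ^ 2 + 6 * K * X + b ^ 2 * K ^ 2).
  set (P := (4 * X + b ^ 2 * K) * (X + g * K) ^ 2 - (2 * X + 2 * K) * (X ^ 2 + 4 * K * X + b ^ 2 * K ^ 2)).
  assert (hbg : b = g * g - 2) by lra.
  assert (hP : 0 <= P).
  { replace P with (2 * X ^ 3 + (b ^ 2 + 8 * g - 10) * K * X ^ 2 + (4 * b + 2 * b ^ 2 * g - 2 * b ^ 2) * K ^ 2 * X + b ^ 3 * K ^ 3)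
      by (unfold P; rewrite hbg; ring).
    assert (0 <= 4 * b + 2 * b ^ 2 * g - 2 * b ^ 2) by nra.
    assert (0 <= b ^ 2 + 8 * g - 10) by nra.
    repeat apply Rplus_le_le_0_compat; repeat apply Rmult_le_pos; try apply pow_le; lra. }
  apply Rsqr_incr_0_var; unfold Rsqr; [| exact hP].
  assert (E : P * P - S * A * (S * A)
              = (4 * b ^ 2 + 32 * g - 80) * X ^ 5 * K
                + (b ^ 4 + 24 * b ^ 2 * g - 36 * b ^ 2 + 80 * b - 160 * g + 96) * X ^ 4 * K ^ 2
                + (4 * b ^ 4 * g - 4 * b ^ 4 + 44 * b ^ 3 - 72 * b ^ 2 * g + 52 * b ^ 2 + 64 * b * g - 80 * b - 144) * X ^ 3 * K ^ 3
                + b ^ 2 * (6 * b ^ 3 - 8 * b ^ 2 * g + 7 * b ^ 2 + 32 * b * g - 36 * b - 68) * X ^ 2 * K ^ 4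
                + 4 * b ^ 4 * (b * g - b - 2) * X * K ^ 5).
  { replace (S * A * (S * A)) with (S * S * (A * A)) by ring. rewrite hAA. unfold P, S. rewrite hbg. ring. }
  assert (0 <= P * P - S * A * (S * A)).
  { rewrite E. repeat apply Rplus_le_le_0_compat; repeat apply Rmult_le_pos; try apply pow_le; lra. }
  lra.
Qed.

(* The six items in the reduced variables X = x/(N-1) >= 0 and A = a(x) > 0;
   the notations below are the reduced forms of x, ao, ao', ao''. *)
Section ReducedEstimates.
Variables N K X A : R.
Hypothesis hN : 4 <= N.
Hypothesis hK : 0 < K.
Hypothesis hX : 0 <= X.
Hypothesis hA : 0 < A.
Hypothesis hAA : A * A = X ^ 2 + 4 * K * X + 2 * N * K ^ 2.

Local Notation x := ((N - 1) * X).
Local Notation u := (X + 2 * K).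
Local Notation ao := (A - x / N).
Local Notation ao' := (u / ((N - 1) * A) - 1 / N).
Local Notation ao'' := (2 * (N - 2) * K ^ 2 / ((N - 1) ^ 2 * A ^ 3)).

Lemma A_sqr_sub : A * A - u * u = 2 * (N - 2) * K ^ 2.
Proof. rewrite hAA. ring. Qed.

Lemma shift_lt_A : u < A.
Proof.
  pose proof A_sqr_sub.
  assert (0 < 2 * (N - 2) * K ^ 2) by (apply Rmult_lt_0_compat; nra).
  nra.
Qed.

Lemma ao_pos : 0 < ao.
Proof.
  pose proof shift_lt_A.
  assert (x / N <= X) by (apply Rle_div_l; [lra | nra]).
  lra.
Qed.

Lemma estimate_i : 4 * x * ao' ^ 2 / ao < 1.
Proof.
  pose proof shift_lt_A as hu. pose proof ao_pos as hao.
  set (D := N * u - (N - 1) * A).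
  assert (key : 4 * X * D ^ 2 < N * (N - 1) * A ^ 2 * (N * A - (N - 1) * X)).
  { destruct (Rle_or_lt 0 D) as [hD | hD].
    - apply numerator_bound_pos; [lra | lra | lra | split; [lra | unfold D; nra]].
    - apply numerator_bound_neg; unfold D in hD; lra. }
  assert (E : ao - 4 * x * ao' ^ 2
              = (N * (N - 1) * A ^ 2 * (N * A - (N - 1) * X) - 4 * X * D ^ 2) / (N ^ 2 * (N - 1) * A ^ 2))
    by (unfold D; field; lra).
  assert (0 < (N * (N - 1) * A ^ 2 * (N * A - (N - 1) * X) - 4 * X * D ^ 2) / (N ^ 2 * (N - 1) * A ^ 2))
    by (apply Rdiv_lt_0_compat; [lra | repeat apply Rmult_lt_0_compat; try apply pow_lt; lra]).
  apply Rlt_div_l; lra.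
Qed.

(* Item (ii): 2 x ao'' + ao' = (2X(A^2 - u^2) + u A^2)/((N-1)A^3) - 1/N, the
   fraction is < 3/(2(N-1)) by cubic_bound, and 3/(2(N-1)) - 1/N is at most
   the target exactly when N >= 4. *)
Lemma estimate_ii : 2 * x * ao'' + ao' < 2 * (N - 1) / (N * (N + 2)).
Proof.
  pose proof shift_lt_A as hu. pose proof A_sqr_sub as hsub.
  assert (E : 2 * x * ao'' + ao' = (2 * X * (A * A - u * u) + u * A ^ 2) / ((N - 1) * A ^ 3) - 1 / N)
    by (rewrite hsub; field; lra).
  assert (hcub : 2 * X * (A * A - u * u) + u * A ^ 2 < 3 / 2 * A ^ 3).
  { assert (2 * X * (A * A - u * u) <= 2 * u * (A * A - u * u)) by (apply Rmult_le_compat_r; nra).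
    pose proof (cubic_bound u A hA ltac:(lra)). nra. }
  assert (hfrac : (2 * X * (A * A - u * u) + u * A ^ 2) / ((N - 1) * A ^ 3) < 3 / (2 * (N - 1))).
  { apply Rlt_div_l; [apply Rmult_lt_0_compat; [lra | apply pow_lt; lra] |].
    replace (3 / (2 * (N - 1)) * ((N - 1) * A ^ 3)) with (3 / 2 * A ^ 3) by (field; lra).
    lra. }
  assert (hN' : 3 / (2 * (N - 1)) - 1 / N <= 2 * (N - 1) / (N * (N + 2))).
  { apply Rmult_le_reg_r with (2 * (N - 1) * N * (N + 2)); [nra|].
    field_simplify; nra. }
  lra.
Qed.

(* Rational upper bound for ao used in (iii): A - u = 2(N-2)K^2/(A + u) <= (N-2)K^2/u. *)
Lemma ao_upper_bound : ao <= X / N + 2 * K + (N - 2) * K ^ 2 / u.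
Proof.
  pose proof shift_lt_A as hu. pose proof A_sqr_sub as hsub.
  assert (A - u <= (N - 2) * K ^ 2 / u)
    by (apply Rle_div_r; [lra | pose proof (pow2_ge_0 (A - u)); nra]).
  assert (ao = A - X + X / N) by (field; lra).
  lra.
Qed.

(* Item (iii): with the bound ao <= U of ao_upper_bound, the slack
   R = x/N + NK - U is positive and R^2 exceeds the square (N-2)^2/(N(N-1)) x U of the square-root term by exactly K^4(N-2)^2/u^2. *)
Lemma estimate_iii : (N - 2) / sqrt (N * (N - 1)) * sqrt (x * ao) + ao < x / N + N * K.
Proof.
  pose proof shift_lt_A as hu. pose proof ao_pos as hao.
  set (U := X / N + 2 * K + (N - 2) * K ^ 2 / u).
  assert (hU : ao <= U) by exact ao_upper_bound.
  set (R := x / N + N * K - U).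
  assert (hR : 0 < R).
  { assert ((N - 2) * K ^ 2 / u <= (N - 2) * K / 2).
    { apply Rle_div_l; [lra |].
      assert (0 <= (N - 2) * K * X) by (apply Rmult_le_pos; nra). nra. }
    assert (0 <= (N - 2) * X / N) by (apply Rdiv_le_0_compat; nra).
    assert (R = (N - 2) * X / N + N * K - 2 * K - (N - 2) * K ^ 2 / u) by (unfold R, U; field; lra).
    nra. }
  assert (hid : R * R - (N - 2) ^ 2 / (N * (N - 1)) * x * U = K ^ 4 * (N - 2) ^ 2 / u ^ 2)
    by (unfold R, U; field; lra).
  set (s := sqrt (N * (N - 1))). set (t := sqrt (x * ao)).
  assert (hs : s * s = N * (N - 1)) by (apply sqrt_sqrt; nra).
  assert (hs0 : 0 < s) by (apply sqrt_lt_R0; nra).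
  assert (ht : t * t = x * ao) by (apply sqrt_sqrt, Rmult_le_pos; nra).
  assert (ht0 : 0 <= t) by apply sqrt_pos.
  set (L := (N - 2) / s * t).
  assert (hL2 : L * L = (N - 2) ^ 2 / (N * (N - 1)) * x * ao).
  { replace (L * L) with ((N - 2) ^ 2 / (s * s) * (t * t)) by (unfold L; field; lra).
    rewrite hs, ht. field. lra. }
  assert (hLU : L * L <= (N - 2) ^ 2 / (N * (N - 1)) * x * U).
  { rewrite hL2. apply Rmult_le_compat_l; [|exact hU].
    apply Rmult_le_pos; [apply Rdiv_le_0_compat; [apply pow2_ge_0 | nra] | nra]. }
  assert (0 < K ^ 4 * (N - 2) ^ 2 / u ^ 2)
    by (apply Rdiv_lt_0_compat; [apply Rmult_lt_0_compat; apply pow_lt | apply pow_lt]; lra).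
  assert (hRR : R * R <= (x / N + N * K - ao) * (x / N + N * K - ao))
    by (apply Rmult_le_compat; unfold R in *; lra).
  assert (L < x / N + N * K - ao).
  { apply Rsqr_incrst_0; unfold Rsqr; [lra | | unfold R in *; lra].
    unfold L. apply Rmult_le_pos; [apply Rdiv_le_0_compat |]; lra. }
  unfold L in *. lra.
Qed.

(* The bracket of item (iv): multiplied by A + X it becomes K (P - S A) of
   majorant_iv (with b^2 = 2N), hence it is nonnegative. *)
Lemma root_gap_iv (b g : R) : b * b = 2 * N -> 0 < g -> g * g = 2 + b ->
  K * A * (A + u) <= (A - X) * (X + g * K) ^ 2.
Proof.
  intros hbb hg hgg.
  assert (hb28 : 28 / 10 <= b) by nra.
  assert (hg219 : 219 / 100 <= g) by nra.
  assert (hAA' : A * A = X ^ 2 + 4 * K * X + b ^ 2 * K ^ 2) by (rewrite hAA, <- hbb; ring).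
  pose proof (majorant_iv K X A b g hK hX hA hb28 hg219 hgg hAA') as hmaj.
  assert (E : ((A - X) * (X + g * K) ^ 2 - K * A * (A + u)) * (A + X)
              = K * ((4 * X + b ^ 2 * K) * (X + g * K) ^ 2 - (2 * X + 2 * K) * (X ^ 2 + 4 * K * X + b ^ 2 * K ^ 2)
                     - (2 * X ^ 2 + 6 * K * X + b ^ 2 * K ^ 2) * A)).
  { replace (((A - X) * (X + g * K) ^ 2 - K * A * (A + u)) * (A + X))
      with ((A * A - X * X) * (X + g * K) ^ 2 - K * (A * A * A + (u + X) * (A * A) + u * X * A)) by ring.
    rewrite hAA'. ring. }
  assert (0 <= ((A - X) * (X + g * K) ^ 2 - K * A * (A + u)) * (A + X))
    by (rewrite E; apply Rmult_le_pos; lra).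
  assert (0 <= (A - X) * (X + g * K) ^ 2 - K * A * (A + u)) by nra.
  lra.
Qed.

(* After using A^2 = X^2 + 4KX + 2NK^2, the difference of the two
   sides is 2N(N-2)K^3 [(A - X)(X + gK)^2 - K A (A + u)] / (A (A + u)(X + gK)^2),
   so everything rests on the bracket being nonnegative. *)
Lemma estimate_iv (b g : R) : b * b = 2 * N -> 0 < g -> g * g = 2 + b ->
  N * K * (ao + x * ao') - A * (ao - x * ao')
    >= 2 * N * (N - 2) * (N - 1) ^ 2 * K ^ 4 / (x + g * (N - 1) * K) ^ 2.
Proof.
  intros hbb hg hgg.
  pose proof shift_lt_A as hu. pose proof A_sqr_sub as hsub.
  pose proof (root_gap_iv b g hbb hg hgg) as hgap.
  assert (E : N * K * (ao + x * ao') - A * (ao - x * ao')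
              - 2 * N * (N - 2) * (N - 1) ^ 2 * K ^ 4 / (x + g * (N - 1) * K) ^ 2
              = 2 * N * (N - 2) * K ^ 3 * ((A - X) * (X + g * K) ^ 2 - K * A * (A + u))
                / (A * (A + u) * (X + g * K) ^ 2)).
  { assert (hgK : 0 < X + g * K) by nra.
    assert (E1 : N * K * (ao + x * ao') - A * (ao - x * ao')
                 = N * K * (A - X) * (A - u) / A + (X ^ 2 + 4 * K * X + 2 * N * K ^ 2 - A * A))
      by (field; lra).
    assert (E2 : A - u = 2 * (N - 2) * K ^ 2 / (A + u)) by (rewrite <- hsub; field; lra).
    rewrite E1, <- hAA, E2. field.
    replace (x + g * (N - 1) * K) with ((N - 1) * (X + g * K)) by ring.
    repeat split; try apply Rmult_integral_contrapositive_currified; lra. }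
  assert (0 <= 2 * N * (N - 2) * K ^ 3 * ((A - X) * (X + g * K) ^ 2 - K * A * (A + u))
                / (A * (A + u) * (X + g * K) ^ 2)).
  { assert (0 < X + g * K) by nra.
    apply Rdiv_le_0_compat.
    - apply Rmult_le_pos; [repeat apply Rmult_le_pos; try apply pow_le|]; lra.
    - repeat apply Rmult_lt_0_compat; try apply pow_lt; lra. }
  lra.
Qed.
(* Item (v), with b = sqrt(2N): the difference of the two sides equals
   (A M - L W)/(A W) for explicit polynomials L, M, W in X, K, b, and
   (A M)^2 - (L W)^2 has nonnegative coefficients since b >= 2. *)
Lemma estimate_v (b : R) : 0 < b -> b * b = 2 * N ->
  2 * ao - x / N + x * ao'
    <= 2 * b * K - (N - 4) * x / (N * (N - 1)) - 6 * (b - 2) * K * x / (3 * x + 2 * b * (N - 1) * K).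
Proof.
  intros hb hbb. assert (hb2 : 2 <= b) by nra.
  set (W := 3 * X + 2 * b * K).
  set (M := 9 * X ^ 2 + (6 * b + 12) * K * X + 4 * b ^ 2 * K ^ 2).
  set (L := 3 * X ^ 2 + 10 * K * X + 2 * b ^ 2 * K ^ 2).
  assert (hW : 0 < W) by (unfold W; nra).
  assert (hM : 0 <= M).
  { assert (0 <= (6 * b + 12) * K * X) by (repeat apply Rmult_le_pos; lra).
    assert (0 <= b ^ 2 * K ^ 2) by (apply Rmult_le_pos; apply pow2_ge_0).
    pose proof (pow2_ge_0 X). unfold M. lra. }
  assert (hLW : L * W <= A * M).
  { apply Rsqr_incr_0_var; unfold Rsqr; [| apply Rmult_le_pos; lra].
    assert (E : A * M * (A * M) - L * W * (L * W)
                = X ^ 2 * K ^ 4 * (8 * b ^ 2 * (5 * b - 8) * (b - 2))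
                  + X ^ 3 * K ^ 3 * (12 * (b - 2) * (b ^ 2 + 14 * b - 24))
                  + X ^ 4 * K ^ 2 * (9 * (5 * b - 6) * (b - 2))).
    { replace (A * M * (A * M)) with (A * A * (M * M)) by ring. rewrite hAA.
      replace N with (b * b / 2) by lra. unfold L, M, W. field. }
    assert (0 <= X ^ 2 * K ^ 4 * (8 * b ^ 2 * (5 * b - 8) * (b - 2))) by (repeat apply Rmult_le_pos; try apply pow_le; nra).
    assert (0 <= X ^ 3 * K ^ 3 * (12 * (b - 2) * (b ^ 2 + 14 * b - 24))) by (repeat apply Rmult_le_pos; try apply pow_le; nra).
    assert (0 <= X ^ 4 * K ^ 2 * (9 * (5 * b - 6) * (b - 2))) by (repeat apply Rmult_le_pos; try apply pow_le; nra).
    lra. }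
  assert (E : 2 * b * K - (N - 4) * x / (N * (N - 1)) - 6 * (b - 2) * K * x / (3 * x + 2 * b * (N - 1) * K)
              - (2 * ao - x / N + x * ao')
              = (A * M - (2 * (A * A) + X * u) * W) / (A * W)).
  { replace (3 * x + 2 * b * (N - 1) * K) with ((N - 1) * W) by (unfold W; ring).
    unfold M, W. field. repeat split; nra. }
  replace (2 * (A * A) + X * u) with L in E
    by (unfold L; rewrite hAA; replace (b ^ 2) with (2 * N) by (rewrite <- hbb; ring); ring).
  assert (0 <= (A * M - L * W) / (A * W)) by (apply Rdiv_le_0_compat; nra).
  lra.
Qed.

(* Item (vi): the difference of the two sides is 2K(A L - P)/A with L, P
   polynomials in X, K, N, and P^2 - (A L)^2 has positive coefficients. *)
Lemma estimate_vi :
  X * (A + N * K) - (X + 2 * N * K) * (ao + A - N * K - x * ao')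
    < - (2 * x * K / (N - 1)) + 2 * N * (N - 4) * K ^ 2.
Proof.
  set (L := (N + 1) * X + 4 * N * K).
  set (P := (N + 1) * X ^ 2 + 7 * N * K * X + 4 * N ^ 2 * K ^ 2).
  assert (hAL : A * L < P).
  { assert (hP : 0 < P).
    { assert (0 <= (N + 1) * X ^ 2) by (apply Rmult_le_pos; nra).
      assert (0 <= 7 * N * K * X) by (repeat apply Rmult_le_pos; lra).
      assert (0 < 4 * N ^ 2 * K ^ 2) by (repeat apply Rmult_lt_0_compat; try apply pow_lt; lra).
      unfold P. lra. }
    apply Rsqr_incrst_0; unfold Rsqr; [| apply Rmult_le_pos; unfold L; nra | lra].
    assert (E : P * P - A * L * (A * L)
                = X ^ 3 * K * (2 * N ^ 2 - 2 * N - 4) + X ^ 2 * K ^ 2 * (6 * N ^ 3 + 5 * N ^ 2 - 34 * N)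
                  + X * K ^ 3 * (40 * N ^ 3 - 80 * N ^ 2) + K ^ 4 * (16 * N ^ 4 - 32 * N ^ 3)).
    { replace (A * L * (A * L)) with (A * A * (L * L)) by ring. rewrite hAA. unfold L, P. ring. }
    assert (0 <= X ^ 3 * K * (2 * N ^ 2 - 2 * N - 4)) by (repeat apply Rmult_le_pos; try apply pow_le; nra).
    assert (0 <= X ^ 2 * K ^ 2 * (6 * N ^ 3 + 5 * N ^ 2 - 34 * N)) by (repeat apply Rmult_le_pos; try apply pow_le; nra).
    assert (0 <= X * K ^ 3 * (40 * N ^ 3 - 80 * N ^ 2)) by (repeat apply Rmult_le_pos; try apply pow_le; nra).
    assert (0 < K ^ 4 * (16 * N ^ 4 - 32 * N ^ 3)) by (apply Rmult_lt_0_compat; [apply pow_lt; lra | nra]).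
    lra. }
  assert (E : X * (A + N * K) - (X + 2 * N * K) * (ao + A - N * K - x * ao')
              - (- (2 * x * K / (N - 1)) + 2 * N * (N - 4) * K ^ 2)
              = (- (X + 4 * N * K) * (A * A) + X * (X + 2 * N * K) * u + 2 * K * L * A) / A)
    by (unfold L; field; lra).
  rewrite hAA in E.
  replace (- (X + 4 * N * K) * (X ^ 2 + 4 * K * X + 2 * N * K ^ 2) + X * (X + 2 * N * K) * u + 2 * K * L * A)
    with (2 * K * (A * L - P)) in E by (unfold L, P; ring).
  assert (2 * K * (A * L - P) / A < 0) by (apply Rdiv_neg_pos; nra).
  lra.
Qed.

End ReducedEstimates.

Theorem lemma2p3 (n : nat) (K : R) (hn : (4 <= n)%nat) (hK : 0 < K) :
  forall x : R, 0 <= x ->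
  let N := INR n in
  let a := a_fun n K x in
  let ao := ao_fun n K x in
  let ao' := ao1 n K x in
  let ao'' := ao2 n K x in
  (* (i) *)
  4 * x * ao' ^ 2 / ao < 1 /\
  (* (ii) *)
  2 * x * ao'' + ao' < 2 * (N - 1) / (N * (N + 2)) /\
  (* (iii) *)
  (N - 2) / sqrt (N * (N - 1)) * sqrt (x * ao) + ao < x / N + N * K /\
  (* (iv) *)
  N * K * (ao + x * ao') - a * (ao - x * ao') >=
    2 * N * (N - 2) * (N - 1) ^ 2 * K ^ 4
    / (x + sqrt (2 + sqrt (2 * N)) * (N - 1) * K) ^ 2 /\
  (* (v) *)
  2 * ao - x / N + x * ao' <=
    2 * sqrt (2 * N) * K - (N - 4) * x / (N * (N - 1))
    - 6 * (sqrt (2 * N) - 2) * K * x / (3 * x + 2 * sqrt (2 * N) * (N - 1) * K) /\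
  (* (vi) *)
  x / (N - 1) * (a + N * K)
    - (x / (N - 1) + 2 * N * K) * (ao + a - N * K - x * ao')
    < - (2 * x * K / (N - 1)) + 2 * N * (N - 4) * K ^ 2.
Proof.
  intros x hx N a ao ao' ao''.
  pose proof (INR_ge_4 n hn) as hN. fold N in hN.
  unfold ao', ao''. rewrite (ao1_eq n K hn hK x), (ao2_eq n K hn hK x).
  unfold ao, ao_fun, a, ao1_closed, ao2_closed. fold N.
  pose proof (a_fun_pos n K hn hK x) as hA. pose proof (a_fun_sqr n K hn hK x) as hAA.
  fold N in hAA. set (A := a_fun n K x) in *.
  set (X := x / (N - 1)) in *.
  assert (hX : 0 <= X) by (apply Rdiv_le_0_compat; lra).
  assert (hxX : x = (N - 1) * X) by (unfold X; field; lra).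
  replace ((X + 2 * K) ^ 2 + (2 * N - 4) * K ^ 2) with (X ^ 2 + 4 * K * X + 2 * N * K ^ 2) in hAA by ring.
  clearbody X. subst x.
  assert (hb : 0 < sqrt (2 * N)) by (apply sqrt_lt_R0; lra).
  assert (hbb : sqrt (2 * N) * sqrt (2 * N) = 2 * N) by (apply sqrt_sqrt; lra).
  assert (hg : 0 < sqrt (2 + sqrt (2 * N))) by (apply sqrt_lt_R0; lra).
  assert (hgg : sqrt (2 + sqrt (2 * N)) * sqrt (2 + sqrt (2 * N)) = 2 + sqrt (2 * N))
    by (apply sqrt_sqrt; lra).
  split; [| split; [| split; [| split; [| split]]]].
  - exact (estimate_i N K X A hN hK hX hA hAA).
  - exact (estimate_ii N K X A hN hK hX hA hAA).
  - exact (estimate_iii N K X A hN hK hX hA hAA).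
  - exact (estimate_iv N K X A hN hK hX hA hAA _ _ hbb hg hgg).
  - exact (estimate_v N K X A hN hK hX hA hAA _ hb hbb).
  - exact (estimate_vi N K X A hN hK hX hA hAA).
Qed.
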